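(* Let $h:\mathbb R^m\times\mathcal U\to\mathbb R^m$ satisfy: (i) for each $u\in\mathcal U$ the map $\Gamma_u:x\mapsto x+h(x,u)$ is a homeomorphism of $\mathbb R^m$, and its inverse $\Lambda_u$ satisfies, for a constant $K>0$, $|\Lambda_u(x)|\le K(1+|x|)$ and $|\Lambda_u(x)-\Lambda_u(y)|\le K|x-y|$ for all $x,y\in\mathbb R^m$, $u\in\mathcal U$; (ii) there exist $\sigma>0$ and $K_0\ge e$ such that for every $p\ge1$ there is a constant $C(p)$ with $$\int_{\mathcal U}|h(x,u)-h(y,u)|^{2p}\mu(du)\le C(p)\log N|x-y|^{2p}+C(p)\frac{\log N}{N^{2\sigma p}}$$ for every integer $N>K_0$ and all $|x|,|y|\le N$. For $\varepsilon>0$ set $F(x)=(\varepsilon+|x|^2)^{-1}$. Then: (1) $F(x-x'+h(x,u)-h(x',u))\le(1+K^2)F(x-x')$ for all $x,x'\in\mathbb R^m$, $u\in\mathcal U$; (2) there is a constant $c'$ independent of $\varepsilon$ such that for every integer $N>K_0$ and all $|x|,|x'|\le N$, $$\int_{\mathcal U}\Big[F(x-x'+h(x,u)-h(x',u))-F(x-x')-\langle\nabla F(x-x'),h(x,u)-h(x',u)\rangle\Big]\mu(du)\le c'\Big\{\log N\,F(x-x')+\log N\frac{F^2(x-x')}{N^{2\sigma}}+\log N\frac{F^{5/2}(x-x')}{N^{3\sigma}}\Big\}.$$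
   Context: $\mathcal U$ is a metric space with a $\sigma$-finite measure $\mu$; $|\cdot|$ is the Euclidean norm. (In the paper, condition (ii) is part of a larger assumption that also includes local Lipschitz-type bounds on $f$ and $g$; only the $h$-part enters this lemma.) *)

From HB Require Import structures.
From mathcomp Require Import all_boot all_order all_algebra.
From mathcomp Require Import all_classical all_reals all_analysis.
Set Implicit Arguments. Unset Strict Implicit. Unset Printing Implicit Defensive.
Import Order.TTheory GRing.Theory Num.Theory.
Import numFieldNormedType.Exports.
Local Open Scope ring_scope.

Definition enorm (R : realType) (m : nat) (v : 'rV[R]_m) : R :=
  Num.sqrt (\sum_(i < m) (v 0 i) ^+ 2).

Definition Feps (R : realType) (m : nat) (eps : R) (x : 'rV[R]_m) : R :=
  (eps + enorm x ^+ 2)^-1.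

(* Write y = x - x' and v = h(x,u) - h(x',u), so that y + v = Gamma_u x - Gamma_u x'.
   The Lipschitz bound on Lambda_u gives |y| <= K |y + v|, which is (1).
   For (2), with a = eps + |y|^2 and b = eps + |y + v|^2 = a + 2<y,v> + |v|^2, the
   second-order Taylor remainder of t |-> 1/t equals
   (4<y,v>^2 + 2<y,v>|v|^2 - a|v|^2) / (a^2 b); by Cauchy-Schwarz, by (1) and by
   AM-GM with weight s = |y| + N^-sigma it is at most
   (1 + K^2) F^3 ((4|y|^2 + |y| s) |v|^2 + (|y| / s) |v|^4).
   Integrating against the moment bounds (ii) for p = 1, 2 and using |y|^2 F <= 1
   leaves only the three terms F, F^2 N^-2sigma and F^5/2 N^-3sigma. *)

From HB Require Import structures.
From mathcomp Require Import all_boot all_order all_algebra.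
From mathcomp Require Import all_classical all_reals all_analysis.
From mathcomp Require Import measurable_realfun ring lra.
Import Order.TTheory GRing.Theory Num.Theory.
Import numFieldNormedType.Exports.
Local Open Scope classical_set_scope.
Local Open Scope ring_scope.

Section RealInequalities.
Context {R : realFieldType}.

Lemma ler_inv_scale (a b k : R) : 0 < a -> 0 < b -> a <= k * b -> b^-1 <= k * a^-1.
Proof.
move=> a_gt0 b_gt0 ab.
rewrite -subr_ge0 (_ : _ - _ = (k * b - a) / (a * b)); last first.
  by field; rewrite !lt0r_neq0.
by rewrite divr_ge0 ?subr_ge0 // mulr_ge0 // ltW.
Qed.

Lemma AMGM_cube (s x : R) : 0 < s -> 2 * x ^+ 3 <= s * x ^+ 2 + x ^+ 4 / s.
Proof.
move=> s_gt0; rewrite -subr_ge0.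
rewrite (_ : _ - _ = x ^+ 2 * (s - x) ^+ 2 / s); last by field; apply: lt0r_neq0.
by rewrite divr_ge0 ?(ltW s_gt0) // mulr_ge0 ?sqr_ge0.
Qed.

Lemma inv_taylor2_le (a b d e M k : R) : 0 < a -> 0 < b -> b = a + 2 * d + e ->
  0 <= e -> 4 * d ^+ 2 + 2 * d * e <= M -> 0 <= M -> b^-1 <= k * a^-1 ->
  b^-1 - a^-1 + 2 * d * a^-1 ^+ 2 <= k * a^-1 ^+ 3 * M.
Proof.
move=> a_gt0 b_gt0 bE e_ge0 dM M_ge0 bk.
have c_gt0 : 0 < a^-1 ^+ 2 * b^-1 by rewrite mulr_gt0 ?exprn_gt0 ?invr_gt0.
rewrite (_ : _ + _ = (4 * d ^+ 2 + 2 * d * e - a * e) * (a^-1 ^+ 2 * b^-1)); last first.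
  by rewrite bE; field; rewrite -bE !lt0r_neq0.
apply: le_trans (_ : M * (a^-1 ^+ 2 * b^-1) <= _).
  by rewrite ler_pM2r //; apply: le_trans dM; rewrite gerBl mulr_ge0 ?(ltW a_gt0).
rewrite (_ : k * _ * M = M * (a^-1 ^+ 2 * (k * a^-1))); last by ring.
by rewrite ler_wpM2l // ler_wpM2l // exprn_ge0 // invr_ge0 (ltW a_gt0).
Qed.

Section MomentCoefficients.
Context {q z w : R}.
Hypotheses (q_ge0 : 0 <= q) (z_ge0 : 0 <= z) (qz_le1 : q * z <= 1) (w_gt0 : 0 < w).

Let T := q ^+ 2 + q ^+ 4 * w ^+ 2 + q ^+ 5 * w ^+ 3.

Let t_ge0 : 0 <= q * z. Proof. exact: mulr_ge0. Qed.

Let coef_le (n : nat) {c : R} : 0 <= c -> c * (q * z) ^+ n <= c.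
Proof. by move=> c_ge0; rewrite ler_piMr // exprn_ile1. Qed.

Lemma second_moment_coef_le :
  q ^+ 6 * (4 * z ^+ 2 + z * (z + w)) * (z ^+ 2 + w ^+ 2) <= 6 * T.
Proof.
rewrite (_ : _ * _ = 5 * (q ^+ 2 * (q * z) ^+ 4) + 5 * (q ^+ 4 * w ^+ 2 * (q * z) ^+ 2)
  + q ^+ 3 * w * (q * z) ^+ 3 + q ^+ 5 * w ^+ 3 * (q * z) ^+ 1); last by ring.
have := coef_le 4 (exprn_ge0 2 q_ge0).
have := coef_le 2 (mulr_ge0 (exprn_ge0 4 q_ge0) (exprn_ge0 2 (ltW w_gt0))).
have := coef_le 3 (mulr_ge0 (exprn_ge0 3 q_ge0) (ltW w_gt0)).
have := coef_le 1 (mulr_ge0 (exprn_ge0 5 q_ge0) (exprn_ge0 3 (ltW w_gt0))).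
have : 2 * (q ^+ 3 * w) <= q ^+ 2 + q ^+ 4 * w ^+ 2.
  by rewrite -subr_ge0 (_ : _ - _ = (q - q ^+ 2 * w) ^+ 2) ?sqr_ge0 //; ring.
have := exprn_ge0 2 q_ge0; have := mulr_ge0 (exprn_ge0 4 q_ge0) (exprn_ge0 2 (ltW w_gt0)).
have := mulr_ge0 (exprn_ge0 5 q_ge0) (exprn_ge0 3 (ltW w_gt0)).
rewrite /T; lra.
Qed.

Lemma fourth_moment_coef_le : q ^+ 6 * (z / (z + w)) * (z ^+ 4 + w ^+ 4) <= T.
Proof.
have zw_gt0 : 0 < z + w by rewrite ltr_wpDl.
(* z / (z + w) is at most 1 and at most z / w *)
apply: (@le_trans _ _ (q ^+ 6 * (z ^+ 4 + z * w ^+ 3))).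
  rewrite -mulrA ler_wpM2l ?exprn_ge0 // mulrAC ler_pdivrMr // -subr_ge0.
  rewrite (_ : _ - _ = z ^+ 4 * w + z ^+ 2 * w ^+ 3); last by ring.
  by rewrite addr_ge0 // mulr_ge0 ?exprn_ge0 ?(ltW w_gt0).
rewrite (_ : _ * _ = q ^+ 2 * (q * z) ^+ 4 + q ^+ 5 * w ^+ 3 * (q * z) ^+ 1); last by ring.
have := coef_le 4 (exprn_ge0 2 q_ge0).
have := coef_le 1 (mulr_ge0 (exprn_ge0 5 q_ge0) (exprn_ge0 3 (ltW w_gt0))).
have := mulr_ge0 (exprn_ge0 4 q_ge0) (exprn_ge0 2 (ltW w_gt0)).
rewrite /T; lra.
Qed.

End MomentCoefficients.
End RealInequalities.

Section EuclideanNorm.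
Context {R : realType} {m : nat}.
Implicit Types (y v : 'rV[R]_m) (t : R).

Definition dotv y v : R := \sum_(i < m) y 0 i * v 0 i.

Lemma enorm_ge0 y : 0 <= enorm y.
Proof. exact: sqrtr_ge0. Qed.

Lemma enorm_sqr y : enorm y ^+ 2 = \sum_(i < m) y 0 i ^+ 2.
Proof. by rewrite sqr_sqrtr // sumr_ge0 // => i _; exact: sqr_ge0. Qed.

Lemma enormZD_sqr t v y :
  enorm (t *: v + y) ^+ 2 = enorm y ^+ 2 + 2 * t * dotv y v + t ^+ 2 * enorm v ^+ 2.
Proof.
rewrite !enorm_sqr /dotv !mulr_sumr -!big_split /=.
by apply: eq_bigr => i _; rewrite !mxE; ring.
Qed.

Lemma enormD_sqr y v :
  enorm (y + v) ^+ 2 = enorm y ^+ 2 + 2 * dotv y v + enorm v ^+ 2.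
Proof. by rewrite addrC -[v]scale1r enormZD_sqr scale1r mulr1 expr1n mul1r. Qed.

Lemma dotv_sqr_le y v : dotv y v ^+ 2 <= enorm y ^+ 2 * enorm v ^+ 2.
Proof.
have [v0|v_neq0] := eqVneq (enorm v) 0.
  have vi0 i : v 0 i = 0.
    have /psumr_eq0P vi20 : \sum_(i < m) v 0 i ^+ 2 = 0 by rewrite -enorm_sqr v0 expr0n.
    by apply/eqP; rewrite -sqrf_eq0 vi20 // => j _; exact: sqr_ge0.
  by rewrite v0 expr0n mulr0 /dotv big1 ?expr0n // => i _; rewrite vi0 mulr0.
have v_gt0 : 0 < enorm v ^+ 2 by rewrite exprn_gt0 // lt0r v_neq0 enorm_ge0.
(* evaluate the nonnegative quadratic [t |-> |t v + y|^2] at its minimum *)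
have := sqr_ge0 (enorm ((- dotv y v / enorm v ^+ 2) *: v + y)).
rewrite enormZD_sqr -(ler_pM2r v_gt0) mul0r.
have -> : (enorm y ^+ 2 + 2 * (- dotv y v / enorm v ^+ 2) * dotv y v +
    (- dotv y v / enorm v ^+ 2) ^+ 2 * enorm v ^+ 2) * enorm v ^+ 2 =
    enorm y ^+ 2 * enorm v ^+ 2 - dotv y v ^+ 2 by field.
by rewrite subr_ge0.
Qed.

Lemma dotv_le y v : dotv y v <= enorm y * enorm v.
Proof.
apply: le_trans (ler_norm _) _.
by rewrite -ler_sqr ?nnegrE ?mulr_ge0 ?enorm_ge0 // real_normK ?num_real // exprMn dotv_sqr_le.
Qed.

Lemma Feps_gt0 (eps : R) y : 0 < eps -> 0 < Feps eps y.
Proof. by move=> eps_gt0; rewrite invr_gt0 ltr_pwDl // sqr_ge0. Qed.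

Lemma derive_Feps (eps : R) y v : 0 < eps ->
  'D_v (Feps eps) y = - (2 * dotv y v) * Feps eps y ^+ 2.
Proof.
move=> eps_gt0; pose a := eps + enorm y ^+ 2.
have a_neq0 : a != 0 by rewrite lt0r_neq0 // ltr_pwDl // sqr_ge0.
(* along the line [t *: v + y], Feps is the inverse of a quadratic polynomial *)
pose p : {poly R} := a%:P + (2 * dotv y v)%:P * 'X + (enorm v ^+ 2)%:P * 'X^2.
have p_eval t : p.[t] = a + 2 * dotv y v * t + enorm v ^+ 2 * t ^+ 2.
  by rewrite !hornerE; ring.
have p0 : p.[0] = a by rewrite p_eval mulr0 expr0n mulr0 !addr0.
have -> : 'D_v (Feps eps) y = 'D_1 (fun t => (p.[t])^-1) 0.
  rewrite /derive /=.
  suff -> : (fun t : R => t^-1 *: (Feps eps (t *: v + y) - Feps eps y)) =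
            (fun t : R => t^-1 *: (p.[t%:A + 0]^-1 - p.[0]^-1)) by [].
  apply/funext => t.
  rewrite /Feps enormZD_sqr -/a addr0 -[t%:A]/(t * 1) mulr1 p_eval p0.
  by congr (_ *: (_^-1 - _)); rewrite /a; ring.
rewrite deriveV ?p0 // derive_val /p !derivD !derivM !derivC !derivX ?derivXn.
rewrite !hornerD !hornerM !hornerC ?hornerX ?hornerXn mul1r mulr1 hornerD !hornerX.
by rewrite -[_ *: _]/(_ * _) /Feps -/a; field.
Qed.

Lemma Feps_le_scale (eps K : R) y v : 0 < eps -> enorm y <= K * enorm v ->
  Feps eps v <= (1 + K ^+ 2) * Feps eps y.
Proof.
move=> eps_gt0 yv; apply: ler_inv_scale; rewrite ?ltr_pwDl ?sqr_ge0 //.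
have : enorm y ^+ 2 <= (K * enorm v) ^+ 2.
  by rewrite ler_sqr ?nnegrE ?enorm_ge0 ?(le_trans (enorm_ge0 y) yv).
have := sqr_ge0 (enorm v); have := mulr_ge0 (sqr_ge0 K) (ltW eps_gt0).
rewrite exprMn; lra.
Qed.

Lemma Feps_inv_lipschitz_le {eps K : R} {G L : 'rV[R]_m -> 'rV[R]_m} x x' :
  0 < eps -> cancel G L -> (forall a b, enorm (L a - L b) <= K * enorm (a - b)) ->
  Feps eps (G x - G x') <= (1 + K ^+ 2) * Feps eps (x - x').
Proof.
move=> eps_gt0 GK L_lip; apply: Feps_le_scale => //.
by have := L_lip (G x) (G x'); rewrite !GK.
Qed.

Lemma Feps_remainder_le (eps k s : R) y v : 0 < eps -> 0 < s ->
  Feps eps (y + v) <= k * Feps eps y ->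
  Feps eps (y + v) - Feps eps y - 'D_v (Feps eps) y <=
  k * Feps eps y ^+ 3 * ((4 * enorm y ^+ 2 + enorm y * s) * enorm v ^+ 2
                         + enorm y / s * enorm v ^+ 4).
Proof.
move=> eps_gt0 s_gt0 Fk; rewrite derive_Feps // mulNr opprK.
have z_ge0 := enorm_ge0 y; have D_ge0 := enorm_ge0 v.
apply: (@inv_taylor2_le _ _ _ _ (enorm v ^+ 2)); rewrite ?ltr_pwDl ?sqr_ge0 //.
- by rewrite enormD_sqr; ring.
- have : 2 * enorm v ^+ 3 <= s * enorm v ^+ 2 + enorm v ^+ 4 / s by exact: AMGM_cube.
  have := dotv_sqr_le y v; have := dotv_le y v.
  have := mulr_ge0 z_ge0 (sqr_ge0 (enorm v)).
  nra.
- have s_ge0 := ltW s_gt0.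
  by rewrite addr_ge0 ?mulr_ge0 ?addr_ge0 ?mulr_ge0 ?invr_ge0 ?exprn_ge0.
Qed.

End EuclideanNorm.

Section Integration.
Context {R : realType} {d : measure_display} {U : measurableType d}.
Variable mu : {measure set U -> \bar R}.

(* [G] need not be measurable: \int G <= \int G^+, and the integral of the
   nonnegative G^+ is a supremum over simple functions below G^+ <= g *)
Lemma le_integral_ge0_majorant (G g : U -> R) :
  (forall u, G u <= g u) -> (forall u, 0 <= g u) ->
  (\int[mu]_(u in setT) (G u)%:E <= \int[mu]_(u in setT) (g u)%:E)%E.
Proof.
move=> Gg g_ge0; rewrite integralE.
apply: (@le_trans _ _ (\int[mu]_(u in setT) ((EFin \o G)^\+ u) + 0)%E).
  by apply: leeD => //; rewrite oppe_le0; apply: integral_ge0 => u _; exact: funeneg_ge0.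
rewrite adde0 !ge0_integralTE; [|by move=> u; rewrite lee_fin|by move=> u; exact: funepos_ge0].
apply: ereal_sup_le => _ [f /= f_le <-]; exists f => //= u.
by apply: le_trans (f_le u) _; rewrite funeposE ge_max !lee_fin Gg g_ge0.
Qed.

Lemma ge0_integral_comb (c1 c2 : R) (f1 f2 : U -> R) : 0 <= c1 -> 0 <= c2 ->
  (forall u, 0 <= f1 u) -> (forall u, 0 <= f2 u) ->
  measurable_fun setT f1 -> measurable_fun setT f2 ->
  (\int[mu]_(u in setT) (c1 * f1 u + c2 * f2 u)%:E =
   c1%:E * \int[mu]_(u in setT) (f1 u)%:E + c2%:E * \int[mu]_(u in setT) (f2 u)%:E)%E.
Proof.
move=> c1_ge0 c2_ge0 f1_ge0 f2_ge0 mf1 mf2.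
under eq_integral do rewrite EFinD EFinM EFinM.
rewrite ge0_integralD //; last 4 first.
- by move=> u _; rewrite -EFinM lee_fin mulr_ge0.
- by apply/measurable_EFinP; apply: measurable_funM => //; exact: measurable_cst.
- by move=> u _; rewrite -EFinM lee_fin mulr_ge0.
- by apply/measurable_EFinP; apply: measurable_funM => //; exact: measurable_cst.
by rewrite !ge0_integralZl_EFin //; first [move=> u _; rewrite lee_fin | exact/measurable_EFinP].
Qed.

Lemma measurable_enorm_sqr {m : nat} (D : U -> 'rV[R]_m) :
  (forall i, measurable_fun setT (fun u => D u 0 i)) ->
  measurable_fun setT (fun u => enorm (D u) ^+ 2).
Proof.
move=> mD; under eq_fun do rewrite enorm_sqr.
by apply: measurable_sum => i; apply: measurable_funX.
Qed.

Lemma moment_bound_powR_nat {f : U -> R} {c L N sigma z : R} (n : nat) :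
  (forall u, 0 <= f u) -> 0 <= z -> 0 <= L ->
  (\int[mu]_(u in setT) (f u `^ (2 * n%:R))%:E <=
     (c * L * z `^ (2 * n%:R) + c * L / N `^ (2 * sigma * n%:R))%:E)%E ->
  (\int[mu]_(u in setT) (f u ^+ (2 * n))%:E <=
     (`|c| * L * (z ^+ (2 * n) + (N `^ sigma)^-1 ^+ (2 * n)))%:E)%E.
Proof.
move=> f_ge0 z_ge0 L_ge0 bound.
have pow2n x : 0 <= x -> x `^ (2 * n%:R) = x ^+ (2 * n).
  by move=> x_ge0; rewrite -natrM powR_mulrn.
rewrite (eq_integral (fun u => (f u `^ (2 * n%:R))%:E)) => [|u _]; last by rewrite pow2n.
apply: le_trans bound _; rewrite lee_fin pow2n //.
rewrite (mulrC 2 sigma) -(mulrA sigma) powRrM pow2n ?powR_ge0 // exprVn.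
rewrite (_ : _ + _ = c * (L * (z ^+ (2 * n) + (N `^ sigma ^+ (2 * n))^-1))); last by ring.
rewrite mulrA ler_wpM2r ?ler_wpM2r ?ler_norm //.
by rewrite addr_ge0 ?invr_ge0 ?exprn_ge0 ?powR_ge0.
Qed.

Lemma integral_Feps_remainder_le {m : nat} {eps k w A2 A4 : R}
    {y : 'rV[R]_m} {D : U -> 'rV[R]_m} :
  0 < eps -> 0 <= k -> 0 < w -> 0 <= A2 -> 0 <= A4 ->
  (forall i, measurable_fun setT (fun u => D u 0 i)) ->
  (forall u, Feps eps (y + D u) <= k * Feps eps y) ->
  (\int[mu]_(u in setT) (enorm (D u) ^+ 2)%:E <= (A2 * (enorm y ^+ 2 + w ^+ 2))%:E)%E ->
  (\int[mu]_(u in setT) (enorm (D u) ^+ 4)%:E <= (A4 * (enorm y ^+ 4 + w ^+ 4))%:E)%E ->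
  (\int[mu]_(u in setT) (Feps eps (y + D u) - Feps eps y - 'D_(D u) (Feps eps) y)%:E <=
   (k * (6 * A2 + A4) * (Feps eps y + Feps eps y ^+ 2 * w ^+ 2
                         + Feps eps y `^ (5 / 2) * w ^+ 3))%:E)%E.
Proof.
move=> eps_gt0 k_ge0 w_gt0 A2_ge0 A4_ge0 mD Fk I2 I4.
set F := Feps eps y; set z := enorm y; set s := z + w.
have z_ge0 : 0 <= z := enorm_ge0 y.
have s_gt0 : 0 < s by rewrite ltr_wpDl.
set q := Num.sqrt F; have q_ge0 : 0 <= q := sqrtr_ge0 F.
have F_gt0 : 0 < F by exact: Feps_gt0.
have Fq : F = q ^+ 2 by rewrite sqr_sqrtr // ltW.
have F52 : F `^ (5 / 2) = q ^+ 5.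
  by rewrite Fq -(powR_mulrn 2 q_ge0) -powRrM (_ : 2%:R * (5 / 2) = 5%:R) ?powR_mulrn //; field.
have qz_le1 : q * z <= 1.
  rewrite -(expr_le1 (n := 2)) ?mulr_ge0 // exprMn -Fq /F /Feps -/z.
  by rewrite mulrC ler_pdivrMr ?mul1r ?lerDr ?ltW // ltr_pwDl // sqr_ge0.
pose c2 := k * F ^+ 3 * (4 * z ^+ 2 + z * s); pose c4 := k * F ^+ 3 * (z / s).
have kF3_ge0 : 0 <= k * F ^+ 3 by rewrite mulr_ge0 // exprn_ge0 // ltW.
have c2_ge0 : 0 <= c2 := mulr_ge0 kF3_ge0
  (addr_ge0 (mulr_ge0 (ler0n _ 4) (sqr_ge0 z)) (mulr_ge0 z_ge0 (ltW s_gt0))).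
have c4_ge0 : 0 <= c4 := mulr_ge0 kF3_ge0 (divr_ge0 z_ge0 (ltW s_gt0)).
have m2 := measurable_enorm_sqr D mD.
have m4 : measurable_fun setT (fun u => enorm (D u) ^+ 4).
  by under eq_fun do rewrite (exprM _ 2 2); exact: measurable_funX.
apply: le_trans (le_integral_ge0_majorant _
  (fun u => c2 * enorm (D u) ^+ 2 + c4 * enorm (D u) ^+ 4) _ _) _.
- move=> u; apply: le_trans (Feps_remainder_le _ _ _ _ _ eps_gt0 s_gt0 (Fk u)) _.
  by rewrite -/F (_ : _ * _ = c2 * enorm (D u) ^+ 2 + c4 * enorm (D u) ^+ 4) ?lexx // /c2 /c4 -/z; ring.
- by move=> u; rewrite addr_ge0 // mulr_ge0 // exprn_ge0 // enorm_ge0.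
rewrite ge0_integral_comb // => [|u|u]; rewrite ?exprn_ge0 ?enorm_ge0 //.
apply: le_trans (leeD (lee_wpmul2l _ I2) (lee_wpmul2l _ I4)) _; rewrite ?lee_fin //.
rewrite /c2 /c4 /s F52 Fq -!exprM -/z.
have := ler_wpM2l (mulr_ge0 k_ge0 A2_ge0) (second_moment_coef_le q_ge0 z_ge0 qz_le1 w_gt0).
have := ler_wpM2l (mulr_ge0 k_ge0 A4_ge0) (fourth_moment_coef_le q_ge0 z_ge0 qz_le1 w_gt0).
lra.
Qed.

End Integration.

Theorem lemma4p1 (R : realType) (m : nat)
    (d : measure_display) (U : measurableType d)
    (mu : {measure set U -> \bar R})
    (h : 'rV[R]_m -> U -> 'rV[R]_m)
    (K : R) (Lambda : U -> 'rV[R]_m -> 'rV[R]_m)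
    (sigma K0 : R) (C : R -> R) :
  sigma_finite setT mu ->
  (forall x (i : 'I_m), measurable_fun setT (fun u => h x u 0 i)) ->
  (* (i) *)
  0 < K ->
  (forall u, continuous (fun x : 'rV[R]_m => x + h x u)) ->
  (forall u, cancel (fun x => x + h x u) (Lambda u)) ->
  (forall u, cancel (Lambda u) (fun x => x + h x u)) ->
  (forall u x, enorm (Lambda u x) <= K * (1 + enorm x)) ->
  (forall u x y, enorm (Lambda u x - Lambda u y) <= K * enorm (x - y)) ->
  (* (ii) *)
  0 < sigma -> expR 1 <= K0 ->
  (forall p : R, 1 <= p -> forall N : nat, K0 < N%:R ->
     forall x y, enorm x <= N%:R -> enorm y <= N%:R ->
     (\int[mu]_(u in setT) (enorm (h x u - h y u) `^ (2 * p))%:E <=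
      (C p * ln N%:R * enorm (x - y) `^ (2 * p)
       + C p * ln N%:R / N%:R `^ (2 * sigma * p))%:E)%E) ->
  (* conclusion (1) *)
  (forall eps : R, 0 < eps -> forall x x' u,
     Feps eps (x - x' + h x u - h x' u) <= (1 + K ^+ 2) * Feps eps (x - x'))
  /\
  (* conclusion (2); c' chosen before eps, hence independent of it *)
  (exists c' : R, forall eps : R, 0 < eps ->
     forall N : nat, K0 < N%:R ->
     forall x x', enorm x <= N%:R -> enorm x' <= N%:R ->
     (\int[mu]_(u in setT)
        (Feps eps (x - x' + h x u - h x' u) - Feps eps (x - x')
         - 'D_(h x u - h x' u) (Feps eps) (x - x'))%:E <=
      (c' * (ln N%:R * Feps eps (x - x')
             + ln N%:R * Feps eps (x - x') ^+ 2 / N%:R `^ (2 * sigma)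
             + ln N%:R * Feps eps (x - x') `^ (5 / 2) / N%:R `^ (3 * sigma)))%:E)%E).
Proof.
move=> _ mh _ _ LambdaK _ _ Lambda_lip _ e_le_K0 moment.
have Gamma_scale eps x x' u : 0 < eps ->
    Feps eps (x - x' + h x u - h x' u) <= (1 + K ^+ 2) * Feps eps (x - x').
  move=> eps_gt0; rewrite -addrA addrACA -opprD.
  exact: (Feps_inv_lipschitz_le (G := fun z => z + h z u) _ _ eps_gt0 (LambdaK u) (Lambda_lip u)).
split=> [eps eps_gt0 x x' u|]; first exact: Gamma_scale.
exists ((1 + K ^+ 2) * (6 * `|C 1| + `|C 2|)) => eps eps_gt0 N K0_lt_N x x' xN x'N.
have N_gt1 : 1 < N%:R :> R.
  apply: lt_trans K0_lt_N; apply: lt_le_trans e_le_K0.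
  by apply: lt_le_trans (expR_ge1Dx 1); rewrite ltrDl.
have L_ge0 : 0 <= ln N%:R :> R by rewrite ln_ge0 // ltW.
have w_gt0 : 0 < (N%:R `^ sigma)^-1 :> R by rewrite invr_gt0 powR_gt0 // (lt_trans ltr01).
have mD i : measurable_fun setT (fun u => (h x u - h x' u) 0 i).
  by under eq_fun do rewrite !mxE; exact: measurable_funB.
have I2 := moment_bound_powR_nat mu 1 (fun u => enorm_ge0 _) (enorm_ge0 _) L_ge0
  (moment 1 (lexx 1) N K0_lt_N x x' xN x'N).
have I4 := moment_bound_powR_nat mu 2 (fun u => enorm_ge0 _) (enorm_ge0 _) L_ge0
  (moment 2 (ler1n _ 2) N K0_lt_N x x' xN x'N).
have k_ge0 : 0 <= 1 + K ^+ 2 by rewrite addr_ge0 ?sqr_ge0.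
have F_scale u : Feps eps (x - x' + (h x u - h x' u)) <= (1 + K ^+ 2) * Feps eps (x - x').
  by rewrite addrA; exact: Gamma_scale.
under eq_integral do rewrite -(addrA (x - x')).
apply: le_trans (integral_Feps_remainder_le mu eps_gt0 k_ge0 w_gt0
  (mulr_ge0 (normr_ge0 _) L_ge0) (mulr_ge0 (normr_ge0 _) L_ge0) mD F_scale I2 I4) _.
rewrite lee_fin (mulrC 2 sigma) (mulrC 3 sigma) !(powRrM _ sigma) !powR_mulrn ?powR_ge0 // -!exprVn.
by rewrite le_eqVlt; apply/predU1l; ring.
Qed.
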